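(* Let $\xi$ be a positive integer-valued random variable with $\xi\ge1$ almost surely, let $\alpha\in(0,1]$ with $\mathbb{E}[\xi]\alpha>1$, and let $q$ be the extinction probability of a Galton--Watson process whose offspring distribution $\zeta$ is $\mathrm{Bin}(\xi,\alpha)$ (i.e., given $\xi$, $\zeta$ is binomial with parameters $\xi$ and $\alpha$). Then $$q\le\frac{1-\alpha}{1-\mathbb{E}\big[(1-\alpha)^\xi\big]-\mathbb{E}\big[\xi\alpha(1-\alpha)^{\xi-1}\big]}.$$ *)

From Stdlib Require Import Reals Lra Lia.
From Coquelicot Require Import Coquelicot.
Open Scope R_scope.

(* Offspring law of zeta ~ Bin(xi, alpha), where p m = P(xi = m):
   P(zeta = k) = sum_m P(xi = m) * C(m,k) alpha^k (1-alpha)^(m-k)  (0 if k > m). *)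
Definition binom_pmf (m k : nat) (a : R) : R :=
  if Nat.leb k m then Binomial.C m k * a ^ k * (1 - a) ^ (m - k) else 0.

Definition mixed_binom (p : nat -> R) (a : R) (k : nat) : R :=
  Series (fun m => p m * binom_pmf m k a).

Fixpoint conv_pow (off : nat -> R) (j : nat) : nat -> R :=
  match j with
  | O => fun k => if Nat.eqb k 0 then 1 else 0
  | S j' => fun k => sum_f_R0 (fun i => conv_pow off j' i * off (k - i)%nat) k
  end.

(* Law of the generation size Z_n of a Galton--Watson process with Z_0 = 1
   and offspring law off:  P(Z_{n+1} = k) = sum_j P(Z_n = j) P(S_j = k). *)
Fixpoint gw_law (off : nat -> R) (n : nat) : nat -> R :=
  match n with
  | O => fun k => if Nat.eqb k 1 then 1 else 0
  | S n' => fun k => Series (fun j => gw_law off n' j * conv_pow off j k)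
  end.

(* Extinction probability P(exists n, Z_n = 0) = lim_n P(Z_n = 0)
   (the events {Z_n = 0} increase in n). *)
Definition extinction_prob (off : nat -> R) : R :=
  real (Lim_seq (fun n => gw_law off n 0%nat)).

From Stdlib Require Import Reals Lra Lia.
From Coquelicot Require Import Coquelicot.
Open Scope R_scope.

(** Write [F] for the generating function of the offspring law, [q0 = F(0)],
    [q1 = F'(0)] and [D = 1 - q0 - q1].  Since the coefficients of [F] beyond
    degree one add up to at most [D], one has [F(s) <= q0 + q1 s + D s^2] on
    [[0,1]], and when [q0 <= D c] this quadratic maps [[0,c]] into itself.
    The generating function of the [n]-th generation is the [n]-fold iterate
    of [F], so it also maps [[0,c]] into itself, and evaluating it at [0]
    bounds every [P(Z_n = 0)], hence [q], by [c].  For [Bin(xi, alpha)]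
    offspring, [q0 = E (1-alpha)^xi <= 1 - alpha] because [xi >= 1], so
    [c = (1 - alpha) / D] works when it is at most [1] (otherwise the bound
    is trivial); [D > 0] because [D] vanishes only if
    [xi = 1] almost surely, which contradicts [E xi * alpha > 1]. *)

Lemma Series_bounded_psums (f : nat -> R) (M : R) :
  (forall n, 0 <= f n) -> (forall N, sum_f_R0 f N <= M) ->
  ex_series f /\ Series f <= M.
Proof.
  intros f_ge0 psum_le.
  destruct (growing_cv (sum_f_R0 f)) as [l Hl].
  - intro n; simpl; specialize (f_ge0 (S n)); lra.
  - exists M; intros x [n ->]; apply psum_le.
  - assert (Hs : is_series f l) by (apply is_series_Reals; exact Hl).
    split; [exists l; exact Hs|].
    rewrite (is_series_unique _ _ Hs).
    apply Rnot_lt_le; intro Hlt.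
    destruct (Hl (l - M)) as [N HN]; [lra|].
    specialize (HN N (le_n _)); specialize (psum_le N).
    unfold R_dist in HN; apply Rabs_def2 in HN; lra.
Qed.

Lemma sum_f_R0_le_Series (f : nat -> R) (N : nat) :
  (forall n, 0 <= f n) -> ex_series f -> sum_f_R0 f N <= Series f.
Proof.
  intros f_ge0 f_ex; apply sum_incr; [|exact f_ge0].
  apply is_series_Reals, Series_correct, f_ex.
Qed.

Lemma Series_nonneg (f : nat -> R) : (forall n, 0 <= f n) -> 0 <= Series f.
Proof.
  intros f_ge0; unfold Series.
  assert (Hlim : Rbar_le 0 (Lim_seq (sum_n f))).
  { rewrite <- (Lim_seq_const 0); apply Lim_seq_le_loc; exists O; intros n _.
    rewrite sum_n_Reals; apply cond_pos_sum; auto. }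
  destruct (Lim_seq (sum_n f)); simpl in *; lra.
Qed.

Lemma ex_series_dominated (f g : nat -> R) :
  (forall n, 0 <= f n <= g n) -> ex_series g -> ex_series f.
Proof.
  intros Hfg g_ex; apply (ex_series_le f g); auto.
  intro n; change (Rabs (f n) <= g n); rewrite Rabs_pos_eq; apply Hfg.
Qed.

Lemma sum_f_R0_mono (f : nat -> R) (N M : nat) :
  (forall n, 0 <= f n) -> (N <= M)%nat -> sum_f_R0 f N <= sum_f_R0 f M.
Proof.
  intros f_ge0 HNM; induction HNM as [|M _ IH]; [lra|].
  rewrite tech5; specialize (f_ge0 (S M)); lra.
Qed.

Lemma term_le_sum_f_R0 (f : nat -> R) (i N : nat) :
  (forall n, 0 <= f n) -> (i <= N)%nat -> f i <= sum_f_R0 f N.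
Proof.
  intros f_ge0 HiN; apply Rle_trans with (sum_f_R0 f i).
  - destruct i as [|i]; [simpl; lra|].
    rewrite tech5; pose proof (cond_pos_sum f i f_ge0); lra.
  - apply sum_f_R0_mono; auto.
Qed.

Lemma term_le_Series (f : nat -> R) (i : nat) :
  (forall n, 0 <= f n) -> ex_series f -> f i <= Series f.
Proof.
  intros f_ge0 f_ex; eapply Rle_trans; [apply (term_le_sum_f_R0 f i i); auto|].
  apply sum_f_R0_le_Series; auto.
Qed.

Lemma sum_f_R0_Series (f : nat -> nat -> R) (K : nat) :
  (forall k, ex_series (fun j => f j k)) ->
  ex_series (fun j => sum_f_R0 (f j) K) /\
  sum_f_R0 (fun k => Series (fun j => f j k)) K = Series (fun j => sum_f_R0 (f j) K).
Proof.
  intros f_ex; induction K as [|K [IHex IHeq]]; simpl; [split; auto|].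
  split.
  - apply (ex_series_plus (V := R_NormedModule)); auto.
  - rewrite IHeq, <- Series_plus; auto.
Qed.

Lemma sum_f_R0_cauchy_exchange (u v : nat -> R) (K : nat) :
  sum_f_R0 (fun k => sum_f_R0 (fun i => u i * v (k - i)%nat) k) K =
  sum_f_R0 (fun i => u i * sum_f_R0 v (K - i)) K.
Proof.
  induction K as [|K IH]; [simpl; ring|].
  rewrite tech5, IH, !tech5, Nat.sub_diag.
  rewrite (sum_eq (fun i => u i * sum_f_R0 v (S K - i))
                  (fun i => u i * sum_f_R0 v (K - i) + u i * v (S K - i)%nat)).
  - rewrite sum_plus; simpl; ring.
  - intros i Hi; replace (S K - i)%nat with (S (K - i)) by lia; simpl; ring.
Qed.

Lemma sum_f_R0_cauchy_le (u v : nat -> R) (K : nat) :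
  (forall n, 0 <= u n) -> (forall n, 0 <= v n) ->
  sum_f_R0 (fun k => sum_f_R0 (fun i => u i * v (k - i)%nat) k) K <=
  sum_f_R0 u K * sum_f_R0 v K.
Proof.
  intros u_ge0 v_ge0.
  rewrite sum_f_R0_cauchy_exchange, Rmult_comm, scal_sum.
  apply sum_Rle; intros i Hi.
  apply Rmult_le_compat_l; [auto|]; apply sum_f_R0_mono; auto; lia.
Qed.

Lemma pow_le_one (x : R) (n : nat) : 0 <= x <= 1 -> x ^ n <= 1.
Proof.
  intros Hx; induction n as [|n IH]; simpl; [lra|].
  pose proof (pow_le x n (proj1 Hx)); nra.
Qed.

Definition pgf (f : nat -> R) (s : R) : R := Series (fun k => f k * s ^ k).

Section GeneratingFunction.
Variable f : nat -> R.
Hypothesis f_ge0 : forall k, 0 <= f k.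

Lemma pgf_terms_bounds (s : R) (k : nat) :
  0 <= s <= 1 -> 0 <= f k * s ^ k <= f k.
Proof.
  intros Hs; split.
  - apply Rmult_le_pos; [auto|apply pow_le; lra].
  - rewrite <- (Rmult_1_r (f k)) at 2; apply Rmult_le_compat_l; [auto|].
    apply pow_le_one; lra.
Qed.

Lemma ex_series_pgf (s : R) : ex_series f -> 0 <= s <= 1 -> ex_series (fun k => f k * s ^ k).
Proof. intros f_ex Hs; apply (ex_series_dominated _ f); auto using pgf_terms_bounds. Qed.

Lemma pgf_ge0 (s : R) : 0 <= s -> 0 <= pgf f s.
Proof. intros Hs; apply Series_nonneg; intro k; apply Rmult_le_pos; auto using pow_le. Qed.

Lemma pgf_le_Series (s : R) : ex_series f -> 0 <= s <= 1 -> pgf f s <= Series f.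
Proof. intros f_ex Hs; apply Series_le; auto using pgf_terms_bounds. Qed.


Lemma pgf_le_quadratic (s : R) :
  (forall N, sum_f_R0 f N <= 1) -> 0 <= s <= 1 ->
  pgf f s <= f 0%nat + f 1%nat * s + (1 - f 0%nat - f 1%nat) * s ^ 2.
Proof.
  intros psum_le1 Hs.
  assert (psum_le : forall N, sum_f_R0 (fun k => f k * s ^ k) (S N) <=
    f 0%nat + f 1%nat * s + s ^ 2 * (sum_f_R0 f (S N) - f 0%nat - f 1%nat)).
  { induction N as [|N IH]; [simpl; lra|].
    rewrite !(tech5 _ (S N)).
    assert (f (S (S N)) * s ^ S (S N) <= s ^ 2 * f (S (S N))).
    { replace (S (S N)) with (2 + N)%nat by lia; rewrite pow_add.
      replace (f (2 + N)%nat * (s ^ 2 * s ^ N)) with (s ^ 2 * f (2 + N)%nat * s ^ N) by ring.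
      rewrite <- (Rmult_1_r (s ^ 2 * f (2 + N)%nat)) at 2.
      apply Rmult_le_compat_l; [apply Rmult_le_pos; [apply pow_le; lra|auto]|].
      apply pow_le_one; lra. }
    lra. }
  apply Series_bounded_psums.
  - intro k; apply pgf_terms_bounds; lra.
  - intros [|N].
    + pose proof (f_ge0 0); pose proof (f_ge0 1); pose proof (psum_le1 1%nat).
      simpl in *; nra.
    + eapply Rle_trans; [apply psum_le|].
      pose proof (psum_le1 (S N)); pose proof (pow_le s 2 (proj1 Hs)).
      pose proof (pow_le_one s 2 Hs); nra.
Qed.

End GeneratingFunction.

Lemma conv_pow_ge0 (off : nat -> R) :
  (forall k, 0 <= off k) -> forall j k, 0 <= conv_pow off j k.
Proof.
  intros off_ge0 j; induction j as [|j IH]; intro k; simpl.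
  - destruct (Nat.eqb k 0); lra.
  - apply cond_pos_sum; intro i; apply Rmult_le_pos; auto.
Qed.

Lemma psum_conv_pow_le_pow (off : nat -> R) (s B : R) :
  (forall k, 0 <= off k) -> 0 <= s ->
  (forall N, sum_f_R0 (fun k => off k * s ^ k) N <= B) ->
  forall j K, sum_f_R0 (fun k => conv_pow off j k * s ^ k) K <= B ^ j.
Proof.
  intros off_ge0 Hs psum_le j; induction j as [|j IH]; intro K.
  - simpl; induction K as [|K IHK]; rewrite ?tech5; simpl; lra.
  - assert (terms_ge0 : forall g, (forall k, 0 <= g k) -> forall k, 0 <= g k * s ^ k).
    { intros g g_ge0 k; apply Rmult_le_pos; auto using pow_le. }
    rewrite (sum_eq _ (fun k => sum_f_R0 (fun i =>
      (conv_pow off j i * s ^ i) * (off (k - i)%nat * s ^ (k - i))) k)).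
    2:{ intros k Hk; simpl; rewrite Rmult_comm, scal_sum; apply sum_eq.
        intros i Hi; replace (s ^ k) with (s ^ i * s ^ (k - i))
          by (rewrite <- pow_add; f_equal; lia); ring. }
    eapply Rle_trans; [apply (sum_f_R0_cauchy_le (fun i => conv_pow off j i * s ^ i)
                                                 (fun l => off l * s ^ l));
                       apply terms_ge0; auto using conv_pow_ge0|].
    simpl; rewrite Rmult_comm; apply Rmult_le_compat; auto;
      apply cond_pos_sum, terms_ge0; auto using conv_pow_ge0.
Qed.

Section GaltonWatson.
Variable off : nat -> R.
Hypothesis off_ge0 : forall k, 0 <= off k.
Hypothesis off_ex : ex_series off.
Hypothesis off_total : Series off <= 1.

Lemma pgf_off_bounds (s : R) : 0 <= s <= 1 -> 0 <= pgf off s <= 1.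
Proof.
  intros Hs; split; [apply pgf_ge0; auto; lra|].
  eapply Rle_trans; [apply pgf_le_Series|]; auto.
Qed.

Lemma conv_pow_le1 (j k : nat) : conv_pow off j k <= 1.
Proof.
  assert (psum_le : forall N, sum_f_R0 (fun k => off k * 1 ^ k) N <= Series off).
  { intro N; rewrite (sum_eq _ off) by (intros; rewrite pow1; ring).
    apply sum_f_R0_le_Series; auto. }
  eapply Rle_trans; [|apply (pow_le_one (Series off) j); split; auto using Series_nonneg].
  eapply Rle_trans; [|apply (psum_conv_pow_le_pow off 1 _ off_ge0 Rle_0_1 psum_le j k)].
  replace (conv_pow off j k) with (conv_pow off j k * 1 ^ k) by (rewrite pow1; ring).
  apply (term_le_sum_f_R0 (fun k => conv_pow off j k * 1 ^ k)); [|lia].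
  intro n; rewrite pow1, Rmult_1_r; apply conv_pow_ge0; auto.
Qed.

Definition next_gen (g : nat -> R) (k : nat) : R :=
  Series (fun j => g j * conv_pow off j k).

Section NextGeneration.
Variable g : nat -> R.
Hypothesis g_ge0 : forall j, 0 <= g j.
Hypothesis g_ex : ex_series g.

Lemma next_gen_ge0 (k : nat) : 0 <= next_gen g k.
Proof. apply Series_nonneg; intro j; apply Rmult_le_pos; auto using conv_pow_ge0. Qed.

Lemma psum_pgf_next_gen_le (s : R) (K : nat) : 0 <= s <= 1 ->
  sum_f_R0 (fun k => next_gen g k * s ^ k) K <= pgf g (pgf off s).
Proof.
  intros Hs; pose proof (pgf_off_bounds s Hs) as HF.
  unfold next_gen; rewrite (sum_eq _ (fun k => Series (fun j => g j * conv_pow off j k * s ^ k)))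
    by (intros; rewrite Series_scal_r; reflexivity).
  destruct (sum_f_R0_Series (fun j k => g j * conv_pow off j k * s ^ k) K) as [_ ->].
  { intro k; apply ex_series_scal_r, (ex_series_dominated _ g); auto; intro j; split.
    - apply Rmult_le_pos; auto using conv_pow_ge0.
    - rewrite <- (Rmult_1_r (g j)) at 2; apply Rmult_le_compat_l; auto using conv_pow_le1. }
  apply Series_le; [|apply ex_series_pgf; auto].
  intro j; split.
  - apply cond_pos_sum; intro k.
    apply Rmult_le_pos; [apply Rmult_le_pos; auto using conv_pow_ge0|apply pow_le; lra].
  - rewrite (sum_eq _ (fun k => conv_pow off j k * s ^ k * g j)) by (intros; ring).
    rewrite <- scal_sum; apply Rmult_le_compat_l; [auto|].
    apply psum_conv_pow_le_pow; [auto|lra|].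
    intro N; apply sum_f_R0_le_Series; [|apply ex_series_pgf; auto].
    intro k; apply pgf_terms_bounds; auto.
Qed.

Lemma ex_series_next_gen : ex_series (next_gen g).
Proof.
  apply (ex_series_ext (fun k => next_gen g k * 1 ^ k)); [intro k; rewrite pow1, Rmult_1_r; reflexivity|].
  apply (Series_bounded_psums _ (pgf g (pgf off 1))).
  - intro k; rewrite pow1, Rmult_1_r; apply next_gen_ge0.
  - intro N; apply psum_pgf_next_gen_le; lra.
Qed.

Lemma pgf_next_gen_le (s : R) : 0 <= s <= 1 -> pgf (next_gen g) s <= pgf g (pgf off s).
Proof.
  intros Hs; apply Series_bounded_psums.
  - intro k; apply Rmult_le_pos; [apply next_gen_ge0|apply pow_le; lra].
  - intro N; apply psum_pgf_next_gen_le; auto.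
Qed.

End NextGeneration.

Lemma psum_pgf_gw_law_0 (s : R) (K : nat) :
  sum_f_R0 (fun j => gw_law off 0 j * s ^ j) K = if Nat.eqb K 0 then 0 else s.
Proof.
  induction K as [|K IH]; [simpl; ring|]; rewrite tech5, IH.
  destruct K as [|K]; simpl; [ring|]; destruct (Nat.eqb K 0); ring.
Qed.

Lemma gw_law_summable (n : nat) : (forall k, 0 <= gw_law off n k) /\ ex_series (gw_law off n).
Proof.
  induction n as [|n [IHge0 IHex]].
  - split; [intro k; simpl; destruct (Nat.eqb k 1); lra|].
    apply (ex_series_ext (fun j => gw_law off 0 j * 1 ^ j)); [intro j; rewrite pow1, Rmult_1_r; reflexivity|].
    apply (Series_bounded_psums _ 1).
    + intro j; rewrite pow1, Rmult_1_r; simpl; destruct (Nat.eqb j 1); lra.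
    + intro N; rewrite psum_pgf_gw_law_0; destruct (Nat.eqb N 0); lra.
  - split; [apply next_gen_ge0; auto|apply ex_series_next_gen; auto].
Qed.

Section InvariantInterval.
Variable c : R.
Hypothesis c_bounds : 0 <= c <= 1.
Hypothesis pgf_off_stable : forall s, 0 <= s <= c -> pgf off s <= c.

Lemma pgf_gw_law_stable (n : nat) (s : R) : 0 <= s <= c -> pgf (gw_law off n) s <= c.
Proof.
  revert s; induction n as [|n IH]; intros s Hs.
  - apply Series_bounded_psums.
    + intro j; apply Rmult_le_pos; [simpl; destruct (Nat.eqb j 1); lra|apply pow_le; lra].
    + intro N; rewrite psum_pgf_gw_law_0; destruct (Nat.eqb N 0); lra.
  - destruct (gw_law_summable n) as [gn_ge0 gn_ex].
    eapply Rle_trans; [apply (pgf_next_gen_le _ gn_ge0 gn_ex); lra|].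
    apply IH; split; [apply pgf_ge0; auto; lra|auto].
Qed.

Lemma extinction_prob_le : extinction_prob off <= c.
Proof.
  assert (Hq : forall n, 0 <= gw_law off n 0 <= c).
  { intro n; destruct (gw_law_summable n) as [gn_ge0 gn_ex]; split; [auto|].
    eapply Rle_trans; [|apply (pgf_gw_law_stable n 0); lra].
    replace (gw_law off n 0) with (gw_law off n 0 * 0 ^ 0) by (simpl; ring).
    apply (term_le_Series (fun j => gw_law off n j * 0 ^ j)).
    - intro j; apply Rmult_le_pos; [auto|apply pow_le; lra].
    - apply ex_series_pgf; auto; lra. }
  unfold extinction_prob.
  assert (L0 : Rbar_le 0 (Lim_seq (fun n => gw_law off n 0))).
  { rewrite <- (Lim_seq_const 0); apply Lim_seq_le_loc; exists O; intros; apply Hq. }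
  assert (Lc : Rbar_le (Lim_seq (fun n => gw_law off n 0)) c).
  { rewrite <- (Lim_seq_const c); apply Lim_seq_le_loc; exists O; intros; apply Hq. }
  destruct (Lim_seq (fun n => gw_law off n 0)); simpl in *; lra.
Qed.

End InvariantInterval.
End GaltonWatson.

Lemma C_ge0 (m k : nat) : 0 <= Binomial.C m k.
Proof.
  unfold Binomial.C, Rdiv; apply Rmult_le_pos; [apply pos_INR|].
  apply Rlt_le, Rinv_0_lt_compat, Rmult_lt_0_compat; apply INR_fact_lt_0.
Qed.

Lemma C_S_1 (m : nat) : Binomial.C (S m) 1 = INR (S m).
Proof.
  unfold Binomial.C; replace (S m - 1)%nat with m by lia.
  change (Factorial.fact (S m)) with (S m * Factorial.fact m)%nat; rewrite mult_INR.
  simpl (INR (Factorial.fact 1)); field; apply INR_fact_neq_0.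
Qed.

Section Binomial.
Variable a : R.
Hypothesis a_bounds : 0 < a <= 1.

Lemma binom_pmf_ge0 (m k : nat) : 0 <= binom_pmf m k a.
Proof.
  unfold binom_pmf; destruct (Nat.leb k m); [|lra].
  apply Rmult_le_pos; [apply Rmult_le_pos|]; auto using C_ge0; apply pow_le; lra.
Qed.

Lemma psum_binom_pmf_le1 (m K : nat) : sum_f_R0 (fun k => binom_pmf m k a) K <= 1.
Proof.
  assert (total : sum_f_R0 (fun k => binom_pmf m k a) (m + K) = 1).
  { induction K as [|K IH].
    - rewrite Nat.add_0_r, <- (pow1 m).
      replace 1 with (a + (1 - a)) at 1 by ring; rewrite binomial.
      apply sum_eq; intros i Hi; unfold binom_pmf.
      replace (Nat.leb i m) with true by (symmetry; apply Nat.leb_le; auto); reflexivity.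
    - rewrite Nat.add_succ_r, tech5, IH; unfold binom_pmf.
      replace (Nat.leb (S (m + K)) m) with false by (symmetry; apply Nat.leb_gt; lia); ring. }
  rewrite <- total; apply sum_f_R0_mono; [intro; apply binom_pmf_ge0|lia].
Qed.

Lemma binom_pmf_le1 (m k : nat) : binom_pmf m k a <= 1.
Proof.
  eapply Rle_trans; [|apply (psum_binom_pmf_le1 m k)].
  apply (term_le_sum_f_R0 (fun k => binom_pmf m k a)); auto using binom_pmf_ge0.
Qed.

Lemma binom_pmf_0 (m : nat) : binom_pmf m 0 a = (1 - a) ^ m.
Proof. unfold binom_pmf; simpl; rewrite C_n_0, Nat.sub_0_r; ring. Qed.

Lemma binom_pmf_1 (m : nat) : binom_pmf m 1 a = INR m * a * (1 - a) ^ (m - 1).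
Proof.
  destruct m as [|m]; [unfold binom_pmf; simpl; ring|].
  unfold binom_pmf; simpl Nat.leb; cbv iota; rewrite C_S_1; ring.
Qed.

Definition binom_tail2 (m : nat) : R := 1 - (1 - a) ^ m - INR m * a * (1 - a) ^ (m - 1).

Lemma binom_tail2_SS_ge (m : nat) : a ^ 2 <= binom_tail2 (S (S m)).
Proof.
  induction m as [|m IH]; [unfold binom_tail2; simpl; lra|].
  apply Rle_trans with (binom_tail2 (S (S m))); [exact IH|].
  assert (step : binom_tail2 (S (S (S m))) =
                 binom_tail2 (S (S m)) + INR (S (S m)) * a ^ 2 * (1 - a) ^ S m).
  { unfold binom_tail2; replace (S (S (S m)) - 1)%nat with (S (S m)) by lia.
    replace (S (S m) - 1)%nat with (S m) by lia; rewrite !S_INR; simpl; ring. }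
  rewrite step; enough (0 <= INR (S (S m)) * a ^ 2 * (1 - a) ^ S m) by lra.
  apply Rmult_le_pos; [apply Rmult_le_pos; [apply pos_INR|apply pow_le; lra]|apply pow_le; lra].
Qed.

Lemma binom_tail2_ge0 (m : nat) : 0 <= binom_tail2 m.
Proof.
  destruct m as [|[|m]]; [unfold binom_tail2; simpl; lra|unfold binom_tail2; simpl; lra|].
  pose proof (binom_tail2_SS_ge m); pose proof (pow2_ge_0 a); lra.
Qed.

Section Mixture.
Variable p : nat -> R.
Hypothesis p_ge0 : forall m, 0 <= p m.
Hypothesis p_sum : is_series p 1.
Hypothesis p0 : p 0%nat = 0.

Let p_ex : ex_series p := ex_intro _ 1 p_sum.
Let p_total : Series p = 1 := is_series_unique _ _ p_sum.

Lemma ex_series_mixed_binom_terms (k : nat) : ex_series (fun m => p m * binom_pmf m k a).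
Proof.
  apply (ex_series_dominated _ p); [|exact p_ex]; intro m; split.
  - apply Rmult_le_pos; auto using binom_pmf_ge0.
  - rewrite <- (Rmult_1_r (p m)) at 2; apply Rmult_le_compat_l; auto using binom_pmf_le1.
Qed.

Lemma mixed_binom_ge0 (k : nat) : 0 <= mixed_binom p a k.
Proof. apply Series_nonneg; intro m; apply Rmult_le_pos; auto using binom_pmf_ge0. Qed.

Lemma psum_mixed_binom_le1 (K : nat) : sum_f_R0 (mixed_binom p a) K <= 1.
Proof.
  unfold mixed_binom.
  destruct (sum_f_R0_Series (fun m k => p m * binom_pmf m k a) K) as [_ ->];
    [apply ex_series_mixed_binom_terms|].
  rewrite <- p_total; apply Series_le; [|exact p_ex]; intro m; split.
  - apply cond_pos_sum; intro k; apply Rmult_le_pos; auto using binom_pmf_ge0.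
  - rewrite (sum_eq _ (fun k => binom_pmf m k a * p m)) by (intros; ring).
    rewrite <- scal_sum; rewrite <- (Rmult_1_r (p m)) at 2.
    apply Rmult_le_compat_l; auto using psum_binom_pmf_le1.
Qed.

Lemma mixed_binom_0 : mixed_binom p a 0 = Series (fun m => p m * (1 - a) ^ m).
Proof. apply Series_ext; intro m; rewrite binom_pmf_0; reflexivity. Qed.

Lemma mixed_binom_1 :
  mixed_binom p a 1 = Series (fun m => p m * (INR m * a * (1 - a) ^ (m - 1))).
Proof. apply Series_ext; intro m; rewrite binom_pmf_1; reflexivity. Qed.

Lemma mixed_binom_0_le : mixed_binom p a 0 <= 1 - a.
Proof.
  rewrite mixed_binom_0.
  apply Rle_trans with (Series p * (1 - a)); [|rewrite p_total; lra].
  rewrite <- Series_scal_r; apply Series_le; [|apply ex_series_scal_r, p_ex].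
  intros [|m]; [rewrite p0; simpl; lra|]; split.
  - apply Rmult_le_pos; [auto|apply pow_le; lra].
  - simpl; apply Rmult_le_compat_l; [auto|].
    pose proof (pow_le_one (1 - a) m); pose proof (pow_le (1 - a) m); nra.
Qed.

Lemma mixed_binom_tail2 :
  1 - mixed_binom p a 0 - mixed_binom p a 1 = Series (fun m => p m * binom_tail2 m).
Proof.
  unfold mixed_binom; rewrite <- p_total, <- !Series_minus.
  - apply Series_ext; intro m; rewrite binom_pmf_0, binom_pmf_1.
    unfold binom_tail2; ring.
  - apply (ex_series_minus (V := R_NormedModule));
      [exact p_ex|apply ex_series_mixed_binom_terms].
  - apply ex_series_mixed_binom_terms.
  - exact p_ex.
  - apply ex_series_mixed_binom_terms.
Qed.

(* A vanishing [P(Bin(xi, alpha) >= 2)] forces [xi = 1] almost surely. *)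
Lemma mixed_binom_tail2_pos :
  ~ ex_series (fun m => INR m * p m) \/ Series (fun m => INR m * p m) * a > 1 ->
  0 < 1 - mixed_binom p a 0 - mixed_binom p a 1.
Proof.
  intros supercritical; rewrite mixed_binom_tail2.
  assert (terms_ge0 : forall m, 0 <= p m * binom_tail2 m).
  { intro m; apply Rmult_le_pos; auto using binom_tail2_ge0. }
  assert (terms_ex : ex_series (fun m => p m * binom_tail2 m)).
  { apply (ex_series_dominated _ p); [|exact p_ex]; intro m; split; [auto|].
    rewrite <- (Rmult_1_r (p m)) at 2; apply Rmult_le_compat_l; [auto|].
    unfold binom_tail2; destruct m as [|m]; [simpl; lra|].
    assert (0 <= (1 - a) ^ S m) by (apply pow_le; lra).
    assert (0 <= INR (S m) * a * (1 - a) ^ (S m - 1)).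
    { apply Rmult_le_pos; [apply Rmult_le_pos; [apply pos_INR|lra]|apply pow_le; lra]. }
    lra. }
  apply Rnot_le_lt; intro tail2_le0.
  assert (p_SS : forall m, p (S (S m)) = 0).
  { intro m; apply Rle_antisym; [|auto].
    apply (Rmult_le_reg_r (a ^ 2)); [apply pow_lt; lra|]; rewrite Rmult_0_l.
    apply Rle_trans with (p (S (S m)) * binom_tail2 (S (S m)));
      [apply Rmult_le_compat_l; auto using binom_tail2_SS_ge|].
    eapply Rle_trans; [apply (term_le_Series _ (S (S m)) terms_ge0 terms_ex)|exact tail2_le0]. }
  assert (mean_terms : forall m, INR m * p m = p m).
  { intros [|[|m]]; [rewrite p0|simpl|rewrite p_SS]; ring. }
  destruct supercritical as [not_ex | mean_gt].
  - apply not_ex, (ex_series_ext p); [intro m; rewrite mean_terms; reflexivity|exact p_ex].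
  - rewrite (Series_ext _ p mean_terms), p_total in mean_gt; lra.
Qed.

End Mixture.
End Binomial.

Lemma quadratic_majorant_le (q0 q1 c s : R) :
  0 <= q1 -> q0 + q1 <= 1 -> q0 <= (1 - q0 - q1) * c -> c <= 1 -> 0 <= s <= c ->
  q0 + q1 * s + (1 - q0 - q1) * s ^ 2 <= c.
Proof.
  intros q1_ge0 q_le1 q0_le c_le1 Hs.
  (* at [s = c] the slack is [(1 - c) ((1 - q0 - q1) c - q0)] *)
  assert (q1 * s <= q1 * c) by (apply Rmult_le_compat_l; lra).
  assert ((1 - q0 - q1) * s ^ 2 <= (1 - q0 - q1) * c ^ 2)
    by (apply Rmult_le_compat_l; [lra|simpl; nra]).
  assert (0 <= (1 - c) * ((1 - q0 - q1) * c - q0)) by (apply Rmult_le_pos; lra).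
  simpl in *; nra.
Qed.

Theorem lemma7 (p : nat -> R) (a : R)
  (hp_nonneg : forall m, 0 <= p m)
  (hp_sum : is_series p 1)
  (hp0 : p 0%nat = 0)
  (ha : 0 < a <= 1)
  (hmean : ~ ex_series (fun m => INR m * p m)
           \/ Series (fun m => INR m * p m) * a > 1) :
  extinction_prob (mixed_binom p a) <=
    (1 - a) /
    (1 - Series (fun m => p m * (1 - a) ^ m)
       - Series (fun m => p m * (INR m * a * (1 - a) ^ (m - 1)))).
Proof.
  rewrite <- mixed_binom_0, <- mixed_binom_1.
  pose proof (mixed_binom_ge0 a ha p hp_nonneg) as off_ge0.
  pose proof (psum_mixed_binom_le1 a ha p hp_nonneg hp_sum) as psum_le1.
  pose proof (mixed_binom_tail2_pos a ha p hp_nonneg hp_sum hp0 hmean) as D_pos.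
  pose proof (mixed_binom_0_le a ha p hp_nonneg hp_sum hp0) as off0_le.
  set (off := mixed_binom p a) in *.
  destruct (Series_bounded_psums off 1 off_ge0 psum_le1) as [off_ex off_total].
  set (D := 1 - off 0%nat - off 1%nat) in *.
  destruct (Rle_lt_dec 1 ((1 - a) / D)) as [c_ge1 | c_lt1].
  - eapply Rle_trans; [|exact c_ge1].
    apply extinction_prob_le; auto; [lra|].
    intros s Hs; apply pgf_off_bounds; auto; lra.
  - apply extinction_prob_le; auto; [split; [apply Rdiv_le_0_compat|]; lra|].
    intros s Hs; eapply Rle_trans; [apply pgf_le_quadratic; auto; lra|].
    apply quadratic_majorant_le; auto.
    + specialize (psum_le1 1%nat); simpl in psum_le1; lra.
    + fold D; replace (D * ((1 - a) / D)) with (1 - a) by (field; lra); exact off0_le.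
    + lra.
Qed.
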